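(* Let $n\ge 2$ be an integer and $\Pi_2,\Pi_3>0$. Let $\mathbb{D}^2$ be the $n\times n$ circulant matrix with first row $(-2,1,0,\ldots,0,1)$, and let $A=\begin{bmatrix}0&I\\ \mathbb{D}^2&0\end{bmatrix}\in\mathbb{R}^{2n\times 2n}$, $B=\begin{bmatrix}0\\ I\end{bmatrix}\in\mathbb{R}^{2n\times n}$. Consider the linear quadratic regulator problem: minimize $$\int_0^\infty \boldsymbol{\Phi}(\tau)^T\begin{bmatrix}I&0\\0&\Pi_2 I\end{bmatrix}\boldsymbol{\Phi}(\tau)+\frac{1}{\Pi_3^2}\boldsymbol{\omega}(\tau)^T\boldsymbol{\omega}(\tau)\,d\tau$$ subject to $\frac{d}{d\tau}\boldsymbol{\Phi}(\tau)=A\boldsymbol{\Phi}(\tau)+B\boldsymbol{\omega}(\tau)$, with state $\boldsymbol{\Phi}(\tau)\in\mathbb{R}^{2n}$ and control $\boldsymbol{\omega}(\tau)\in\mathbb{R}^n$. Then the optimal feedback gain $K$ (so that the optimal control is $\boldsymbol{\omega}=-K\boldsymbol{\Phi}$) is $K=\begin{bmatrix}K_1&K_2\end{bmatrix}$ where $K_1,K_2$ are the circulant matrices $$K_1=F^{-1}\mathrm{diag}\big(\hat{K}_0(\kappa)\big)F,\qquad K_2=F^{-1}\mathrm{diag}\Big(\sqrt{2\hat{K}_0(\kappa)+\Pi_2\Pi_3^2}\Big)F,$$ with, for $\kappa\in\{0,\ldots,n-1\}$, $$\hat{K}_0(\kappa)=\hat{D}_{\kappa\kappa}+\sqrt{\hat{D}_{\kappa\kappa}^2+\Pi_3^2},\qquad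 \hat{D}_{\kappa\kappa}=-4\sin^2\!\left(\frac{\pi\kappa}{n}\right).$$ Equivalently, in the spatial frequency domain, $\hat{K}(\kappa)=\begin{bmatrix}\hat{K}_0(\kappa)&\sqrt{2\hat{K}_0(\kappa)+\Pi_2\Pi_3^2}\end{bmatrix}$.
   Context: $F$ denotes the $n\times n$ unitary discrete Fourier transform matrix, $F_{kj}=n^{-1/2}e^{-2\pi i kj/n}$ for $k,j\in\{0,\ldots,n-1\}$; $\mathrm{diag}(f(\kappa))$ is the $n\times n$ diagonal matrix whose $\kappa$-th diagonal entry is $f(\kappa)$, $\kappa=0,\ldots,n-1$. The optimal feedback gain of the LQR problem with cost $\int \boldsymbol{\Phi}^TQ\boldsymbol{\Phi}+\boldsymbol{\omega}^TR\boldsymbol{\omega}$ is $K=R^{-1}B^TP$, where $P$ is the symmetric positive definite (stabilizing) solution of the algebraic Riccati equation $PA+A^TP-PBR^{-1}B^TP+Q=0$. The nondimensional variables arise from the spatial discretization of the wave equation $\partial_t^2p=c^2\partial_x^2p+u$ on a circle, with $\Pi_2,\Pi_3$ weights on kinetic energy and (inverse) control effort. *)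

From HB Require Import structures.
From mathcomp Require Import all_boot all_order all_algebra.
From mathcomp Require Import complex.
From mathcomp Require Import reals trigo.
Set Implicit Arguments. Unset Strict Implicit. Unset Printing Implicit Defensive.
Import Order.TTheory GRing.Theory Num.Theory.
Local Open Scope ring_scope.
Local Open Scope complex_scope.

Section Defs.
Variable R : realType.

Definition toC (x : R) : R[i] := x%:C.

(* n x n circulant matrix with first row (c 0, c 1, ..., c (n-1)):
   entry (i,j) = c ((j - i) mod n). *)
Definition circulant (n : nat) (c : nat -> R) : 'M[R]_n :=
  \matrix_(i < n, j < n) c ((j + n - i) %% n)%N.

(* First row (-2, 1, 0, ..., 0, 1) of the periodic second-difference
   matrix D^2 (entries at positions 1 and n-1 are added, so for n = 2
   the off-diagonal entry is 2). *)
Definition d2row (n : nat) (k : nat) : R :=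
  (if k == 0%N then -2 else 0) + (if k == 1%N then 1 else 0)
  + (if k == n.-1 then 1 else 0).

Definition D2 (n : nat) : 'M[R]_n := circulant n (d2row n).

(* Unitary DFT matrix F_{kj} = n^{-1/2} exp(-2 pi i k j / n). *)
Definition dft (n : nat) : 'M[R[i]]_n :=
  \matrix_(k < n, j < n)
    ((Num.sqrt (n%:R : R))^-1 *
      (cos (2 * pi * (k * j)%:R / n%:R))
     +i* (- ((Num.sqrt (n%:R : R))^-1 * sin (2 * pi * (k * j)%:R / n%:R)))).

Definition cdiag (n : nat) (f : nat -> R) : 'M[R[i]]_n :=
  diag_mx (\row_(k < n) toC (f k)).

Definition fourier_circ (n : nat) (f : nat -> R) : 'M[R[i]]_n :=
  invmx (dft n) *m cdiag n f *m dft n.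

Definition Amat (n : nat) : 'M[R]_(n + n) := block_mx 0 1%:M (D2 n) 0.
Definition Bmat (n : nat) : 'M[R]_(n + n, n) := col_mx 0 1%:M.
Definition Qmat (n : nat) (Pi2 : R) : 'M[R]_(n + n) :=
  block_mx 1%:M 0 0 (Pi2%:M).
Definition Rmat (n : nat) (Pi3 : R) : 'M[R]_n := (Pi3 ^- 2)%:M.

Definition sym_mx (m : nat) (P : 'M[R]_m) : Prop := P^T = P.
Definition posdef_mx (m : nat) (P : 'M[R]_m) : Prop :=
  forall x : 'cV[R]_m, x != 0 -> 0 < (x^T *m P *m x) ord0 ord0.

Definition hurwitz (m : nat) (M : 'M[R]_m) : Prop :=
  forall lam : R[i], eigenvalue (map_mx toC M) lam -> Re lam < 0.

Definition care (m p : nat) (A : 'M[R]_m) (B : 'M[R]_(m, p)) (Q : 'M[R]_m)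
  (Rw : 'M[R]_p) (P : 'M[R]_m) : Prop :=
  P *m A + A^T *m P - P *m B *m invmx Rw *m B^T *m P + Q = 0.

Definition lqr_gain (m p : nat) (B : 'M[R]_(m, p)) (Rw : 'M[R]_p)
  (P : 'M[R]_m) : 'M[R]_(p, m) := invmx Rw *m B^T *m P.

Definition lqr_riccati_sol (m p : nat) (A : 'M[R]_m) (B : 'M[R]_(m, p))
  (Q : 'M[R]_m) (Rw : 'M[R]_p) (P : 'M[R]_m) : Prop :=
  [/\ sym_mx P, posdef_mx P, care A B Q Rw P & hurwitz (A - B *m lqr_gain B Rw P)].

Definition Dhat (n : nat) (k : nat) : R := - 4 * (sin (pi * k%:R / n%:R)) ^+ 2.
Definition Khat0 (n : nat) (Pi3 : R) (k : nat) : R :=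
  Dhat n k + Num.sqrt (Dhat n k ^+ 2 + Pi3 ^+ 2).
Definition Khat2 (n : nat) (Pi2 Pi3 : R) (k : nat) : R :=
  Num.sqrt (2 * Khat0 n Pi3 k + Pi2 * Pi3 ^+ 2).

End Defs.

(* The DFT diagonalizes every circulant matrix: D^2 = F^-1 diag(Dhat) F, and all
   the matrices of the problem are functions h(D^2) of D^2.  Frequency by
   frequency the Riccati equation becomes a 2x2 one for a = [[0, 1], [d, 0]],
   with the explicit solution [[ric11, ric12], [ric12, ric22]] and gain
   [Khat0, sqrt (2 Khat0 + Pi2 Pi3^2)].  Reassembled, this gives a symmetric
   solution P, positive definite by an explicit Cholesky factorization, whose
   closed loop is Hurwitz since at each frequency its characteristic polynomial
   z^2 + Khat2 z + (Khat0 - d) has positive coefficients.  Two stabilizing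
   solutions P, P0 satisfy the Sylvester equation
   (P - P0)(A - S P) + (A - S P0)^T (P - P0) = 0 with Hurwitz coefficients,
   hence P = P0 and the optimal gain is unique. *)

From HB Require Import structures.
From mathcomp Require Import all_boot all_order all_algebra.
From mathcomp Require Import complex.
From mathcomp Require Import reals trigo.
From mathcomp Require Import ring lra.
Set Implicit Arguments. Unset Strict Implicit. Unset Printing Implicit Defensive.
Import Order.TTheory GRing.Theory Num.Theory.
Local Open Scope ring_scope.
Local Open Scope complex_scope.

Lemma sum_expr_root1 (F : idomainType) n (z : F) :
  z ^+ n = 1 -> z != 1 -> \sum_(k < n) z ^+ k = 0.
Proof.
move=> zn z1; have /eqP : (z - 1) * \sum_(k < n) z ^+ k = 0.
  by rewrite -subrX1 zn subrr.
by rewrite mulf_eq0 subr_eq0 (negPf z1) => /eqP.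
Qed.

Lemma riccati_diff (K : comPzRingType) k (A S P P0 : 'M[K]_k) :
  S^T = S -> P0^T = P0 ->
  (P - P0) *m (A - S *m P) + (A - S *m P0)^T *m (P - P0) =
  (P *m A + A^T *m P - P *m S *m P) - (P0 *m A + A^T *m P0 - P0 *m S *m P0).
Proof.
move=> S_sym P0_sym; rewrite (raddfB (@trmx _ k k)) /= trmx_mul S_sym P0_sym.
rewrite mulmxBr mulmxA [(_ - P0 *m S) *m _]mulmxBl addrACA -opprD.
have -> : (P - P0) *m S *m P + P0 *m S *m (P - P0) = P *m S *m P - P0 *m S *m P0.
  by rewrite mulmxBr !mulmxBl subrKA.
rewrite mulmxBl mulmxBr addrACA -opprD !opprB addrACA [RHS]addrACA.
by rewrite [- _ - _]addrC.
Qed.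

Lemma eigenvalueN (K : fieldType) p (A : 'M[K]_p) z :
  eigenvalue (- A) z = eigenvalue A (- z).
Proof.
apply/eigenvalueP/eigenvalueP => -[v vA v_neq0]; exists v => //.
  by rewrite scaleNr -vA mulmxN opprK.
by rewrite mulmxN vA scaleNr opprK.
Qed.

Lemma char_poly_trmx (K : comNzRingType) p (A : 'M[K]_p) : char_poly A^T = char_poly A.
Proof.
rewrite /char_poly -[RHS]det_tr; congr (\det _).
by rewrite /char_poly_mx (raddfB (@trmx _ p p)) /= tr_scalar_mx map_trmx.
Qed.

Lemma eigenvalue_trmx (K : fieldType) p (A : 'M[K]_p) z :
  eigenvalue A^T z = eigenvalue A z.
Proof. by rewrite !eigenvalue_root_char char_poly_trmx. Qed.

(* Sylvester: [X A = B X] forces [X = 0] when [A] and [B] share no eigenvalue,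
   because [char_poly A] evaluated at [B] is then invertible and kills [X]. *)
Lemma sylvester_eq0 (K : closedFieldType) p (X A B : 'M[K]_p) :
  X *m A = B *m X -> (forall z, eigenvalue A z -> ~~ eigenvalue B z) -> X = 0.
Proof.
case: p => [|p] in X A B *; first by move=> *; apply: thinmx0.
move=> XA AB; have X_horner q : X *m horner_mx A q = horner_mx B q *m X.
  elim/poly_ind: q => [|q c IHq]; first by rewrite !rmorph0 mulmx0 mul0mx.
  rewrite !rmorphD !rmorphM /= !horner_mx_X !horner_mx_C mulmxDr mulmxDl.
  by rewrite mulmxA IHq -!mulmxA XA scalar_mxC.
have [rs char_rs] := closed_field_poly_normal (char_poly A).
rewrite (monicP (char_poly_monic A)) scale1r in char_rs.
suff unitB : horner_mx B (char_poly A) \in unitmx.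
  by rewrite -[X](mulKmx unitB) -X_horner Cayley_Hamilton mulmx0 mulmx0.
rewrite char_rs rmorph_prod big_seq; apply: (big_ind [in unitmx]) => //.
- exact: unitmx1.
- by move=> U V U_unit V_unit; rewrite -[U * V]/(U *m V) unitmx_mul U_unit.
move=> z z_rs; rewrite rmorphB /= horner_mx_X horner_mx_C -row_free_unit -kermx_eq0.
apply: negbNE; apply: AB; rewrite eigenvalue_root_char char_rs.
by rewrite root_prod_XsubC.
Qed.

Lemma sylvester_stable_eq0 (C : numClosedFieldType) p (X A N : 'M[C]_p) :
  X *m A + N *m X = 0 ->
  (forall z, eigenvalue A z -> 'Re z < 0) ->
  (forall z, eigenvalue N z -> 'Re z < 0) -> X = 0.
Proof.
move=> XAN A_stable N_stable; apply: (sylvester_eq0 (A := A) (B := - N)).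
  by apply/eqP; rewrite mulNmx -addr_eq0 XAN.
move=> z /A_stable Az_lt0; apply/negP; rewrite eigenvalueN => /N_stable.
by rewrite raddfN /= oppr_lt0 => /(lt_trans Az_lt0); rewrite ltxx.
Qed.

Lemma Re_quadratic_root_lt0 (R : rcfType) (a b : R) (z : R[i]) :
  0 < a -> 0 < b -> z ^+ 2 + b%:C * z + a%:C = 0 -> 'Re z < 0.
Proof.
case: z => x y a_gt0 b_gt0; rewrite -complexRe ltcE /= eqxx expr2; simpc.
move=> /eqP; rewrite eq_complex /= => /andP[/eqP re_eq0 /eqP im_eq0].
have /eqP : y * (2 * x + b) = 0 by lra.
rewrite mulf_eq0 => /orP[/eqP y0|/eqP]; last by lra.
by move: re_eq0; rewrite y0; nra.
Qed.

Lemma posdef_trmx_mul (R : realType) p (T : 'M[R]_p) :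
  T \in unitmx -> posdef_mx (T^T *m T).
Proof.
move=> T_unit x x_neq0; rewrite mulmxA -trmx_mul -mulmxA.
have Tx_neq0 : T *m x != 0.
  by apply: contra x_neq0 => /eqP Tx0; rewrite -[x](mulKmx T_unit) Tx0 mulmx0.
have [i Txi_neq0] : exists i, (T *m x) i 0 != 0.
  apply/existsP; apply: contraR Tx_neq0 => /existsPn Tx0.
  by apply/eqP/matrixP => i j; rewrite (ord1 j) [RHS]mxE; apply/eqP/negPn/Tx0.
rewrite mxE (bigD1 i) //= ltr_pwDl ?sumr_ge0 // => [|j _]; rewrite mxE -expr2.
  by rewrite lt0r sqrf_eq0 Txi_neq0 sqr_ge0.
exact: sqr_ge0.
Qed.

Lemma conj_diag_singular (K : fieldType) p (V : 'M[K]_p) (d z : 'rV[K]_p) :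
  V \in unitmx -> z != 0 -> z *m (invmx V *m diag_mx d *m V) = 0 ->
  exists k, d 0 k = 0.
Proof.
move=> V_unit z_neq0 zVdV.
have : invmx V *m diag_mx d *m V \notin unitmx.
  apply: contra z_neq0 => unit_VdV; apply/eqP.
  by rewrite -[z]mulmx1 -(mulmxV unit_VdV) mulmxA zVdV mul0mx.
rewrite unitmxE unitfE negbK !det_mulmx det_inv mulrAC mulVf -?unitfE -?unitmxE //.
by rewrite mul1r det_diag => /prodf_eq0[k _ /eqP]; exists k.
Qed.

HB.instance Definition _ (R : realType) :=
  GRing.RMorphism.copy (@toC R) (real_complex R).

(* Lets [/=] turn the [rmorph*] forms of [conjc] back into [conjc] without
   unfolding [toC x] into [x +i* 0]. *)
Arguments conjc {R} : simpl never.
Arguments toC {R} : simpl never.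

Lemma conjc_id_Re (R : realType) (z : R[i]) : z^* = z -> toC (complex.Re z) = z.
Proof. by case: z => a b /= [b_eq]; congr (_ +i* _); lra. Qed.

Lemma map_toC_inj (R : realType) p q :
  injective (map_mx (@toC R) : 'M_(p, q) -> 'M_(p, q)).
Proof. exact: map_mx_inj. Qed.

Lemma hurwitz_trmx (R : realType) p (M : 'M[R]_p) : hurwitz M -> hurwitz M^T.
Proof. by move=> M_stable z; rewrite -map_trmx eigenvalue_trmx; apply: M_stable. Qed.

Lemma lqr_riccati_sol_unique (R : realType) p q (A : 'M[R]_p) (B : 'M_(p, q)) Q Rw
    (P P0 : 'M_p) : Rw^T = Rw ->
  lqr_riccati_sol A B Q Rw P -> lqr_riccati_sol A B Q Rw P0 -> P = P0.
Proof.
move=> Rw_sym [_ _ careP stableP] [P0_sym _ careP0 stableP0].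
set S := B *m invmx Rw *m B^T.
have S_sym : S^T = S by rewrite /S !trmx_mul trmxK trmx_inv Rw_sym mulmxA.
have BK X : B *m lqr_gain B Rw X = S *m X by rewrite /lqr_gain !mulmxA.
have ricE X : X *m B *m invmx Rw *m B^T *m X = X *m S *m X by rewrite /S !mulmxA.
move: careP careP0; rewrite /care !ricE => careP careP0.
have diff0 : (P - P0) *m (A - S *m P) + (A - S *m P0)^T *m (P - P0) = 0.
  apply/eqP; rewrite riccati_diff // subr_eq0 -(inj_eq (addIr Q)).
  by rewrite careP careP0.
apply/eqP; rewrite -subr_eq0; apply/eqP/(@map_toC_inj R).
rewrite map_mx0; apply: (sylvester_stable_eq0 (A := map_mx toC (A - S *m P))
    (N := map_mx toC (A - S *m P0)^T)).
- by rewrite -!map_mxM -map_mxD diff0 map_mx0.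
- by rewrite -BK; apply: stableP.
- by rewrite -BK; apply: hurwitz_trmx.
Qed.

Lemma expr_cos_sinN (R : realType) (a : R) k :
  (cos a +i* - sin a) ^+ k = cos (k%:R * a) +i* - sin (k%:R * a).
Proof.
elim: k => [|k IH]; first by rewrite expr0 mul0r cos0 sin0 oppr0.
rewrite exprSr IH; simpc; rewrite -natr1 mulrDl mul1r cosD sinD.
by congr (_ +i* _); ring.
Qed.

Section DiscreteFourier.
Variables (R : realType) (m : nat).
Local Notation n := m.+1.
Local Notation C := R[i].
Local Notation F := (dft R n).
Local Notation s := ((Num.sqrt (n%:R : R))^-1).

Definition omega : C := cos (2 * pi / n%:R) +i* - sin (2 * pi / n%:R).

Lemma omega_exp_n : omega ^+ n = 1.
Proof.
rewrite expr_cos_sinN mulrC divfK ?pnatr_eq0 //.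
by rewrite mulr_natl cos2pi sin2pi oppr0.
Qed.

Lemma omega_exp_neq1 a : (0 < a < n)%N -> omega ^+ a != 1.
Proof.
move=> /andP[a_gt0 a_lt]; rewrite expr_cos_sinN; apply/eqP => -[+ _].
have -> : a%:R * (2 * pi / n%:R) = (pi * a%:R / n%:R : R) *+ 2.
  by rewrite mulr2n; ring.
rewrite cos_mulr2n cos2sin2 => cos1.
have : 0 < sin (pi * a%:R / n%:R : R).
  apply: sin_gt0_pi; rewrite divr_gt0 ?mulr_gt0 ?pi_gt0 ?ltr0n //=.
  by rewrite -mulrA gtr_pMr ?pi_gt0 // ltr_pdivrMr ?ltr0n // mul1r ltr_nat.
move=> /(exprn_gt0 2).
lra.
Qed.

Lemma conj_omega : omega^* = omega^-1.
Proof.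
have omega_neq0 : omega != 0.
  by apply: contra_eq_neq omega_exp_n => ->; rewrite expr0n eq_sym oner_neq0.
apply: (mulIf omega_neq0); rewrite mulVf //; simpc.
by rewrite -!expr2 cos2Dsin2 [sin _ * _]mulrC addrC subrr.
Qed.

Definition chi (x : 'I_n) : C := omega ^+ x.

Lemma chiD x y : chi (x + y) = chi x * chi y.
Proof. by rewrite /chi /= expr_mod ?omega_exp_n // exprD. Qed.

Lemma chi_exp_n x : chi x ^+ n = 1.
Proof. by rewrite /chi -exprM mulnC exprM omega_exp_n expr1n. Qed.

Lemma chi_neq0 x : chi x != 0.
Proof. by apply: contra_eq_neq (chi_exp_n x) => ->; rewrite expr0n eq_sym oner_neq0. Qed.

Lemma chiN x : chi (- x) = (chi x)^-1.
Proof.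
by apply: (mulIf (chi_neq0 x)); rewrite -chiD addNr mulVf ?chi_neq0 // /chi expr0.
Qed.

Lemma chi_neq1 x : x != 0 -> chi x != 1.
Proof. by move=> x_neq0; apply: omega_exp_neq1; rewrite ltn_ord andbT lt0n. Qed.

Lemma conj_chi x : (chi x)^* = chi (- x).
Proof. by rewrite chiN /chi -exprVn -conj_omega rmorphXn. Qed.

Lemma dftE k j : F k j = s%:C * chi j ^+ k.
Proof.
rewrite mxE /chi -exprM expr_cos_sinN; simpc.
suff -> : 2 * pi * (k * j)%:R / n%:R = (j * k)%:R * (2 * pi / n%:R) :> R by [].
by rewrite mulnC mulrAC mulrC.
Qed.

Lemma s_sqr : s ^+ 2 = n%:R^-1.
Proof. by rewrite exprVn sqr_sqrtr // ler0n. Qed.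

Definition dft_adj : 'M[C]_n := (map_mx conjc F)^T.

Lemma dft_adjE i k : dft_adj i k = s%:C * chi (- i) ^+ k.
Proof.
rewrite 2!mxE dftE rmorphM rmorphXn.
by congr (_ * _ ^+ _); [exact: conjc_real | exact: conj_chi].
Qed.

Lemma dft_adj_dft : dft_adj *m F = 1%:M.
Proof.
apply/matrixP => i j; rewrite !mxE.
under eq_bigr => k _ do rewrite dft_adjE dftE mulrACA -exprMn -chiD -rmorphM -expr2 s_sqr.
rewrite -mulr_sumr; have [<-|ij] := eqVneq i j.
  under eq_bigr => k _ do rewrite addNr /chi expr0 expr1n.
  by rewrite sumr_const card_ord -(rmorph_nat (real_complex R)) -rmorphM mulVf ?pnatr_eq0.
rewrite sum_expr_root1 ?mulr0 ?chi_exp_n // chi_neq1 //.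
by apply: contra ij; rewrite addrC subr_eq0 => /eqP ->.
Qed.

Lemma dft_unit : F \in unitmx.
Proof. by case: (mulmx1_unit dft_adj_dft). Qed.

Lemma invmx_dft : invmx F = dft_adj.
Proof. by rewrite -[RHS]mulmx1 -(mulmxV dft_unit) mulmxA dft_adj_dft mul1mx. Qed.

End DiscreteFourier.

Section FourierMultiplier.
Variables (R : realType) (m : nat).
Local Notation n := m.+1.
Local Notation C := R[i].
Local Notation F := (dft R n).
Local Notation chi := (@chi R m).
Implicit Types (f g : nat -> R).

Lemma fourier_circE f i j :
  fourier_circ n f i j = toC n%:R^-1 * \sum_(k < n) toC (f k) * chi (j - i) ^+ k.
Proof.
rewrite /fourier_circ invmx_dft /cdiag mul_mx_diag mxE mulr_sumr.
apply: eq_bigr => k _; rewrite mxE dft_adjE dftE mxE chiD exprMn -s_sqr rmorphXn.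
ring.
Qed.

Lemma fourier_circD f g :
  fourier_circ n (fun k => f k + g k) = fourier_circ n f + fourier_circ n g.
Proof.
rewrite /fourier_circ.
have -> : cdiag n (fun k => f k + g k) = cdiag n f + cdiag n g.
  by apply/matrixP => i j; rewrite !mxE rmorphD mulrnDl.
by rewrite mulmxDr mulmxDl.
Qed.

Lemma fourier_circN f : fourier_circ n (fun k => - f k) = - fourier_circ n f.
Proof.
rewrite /fourier_circ.
have -> : cdiag n (fun k => - f k) = - cdiag n f.
  by apply/matrixP => i j; rewrite !mxE rmorphN mulNrn.
by rewrite mulmxN mulNmx.
Qed.

Lemma fourier_circM f g :
  fourier_circ n (fun k => f k * g k) = fourier_circ n f *m fourier_circ n g.
Proof.
rewrite /fourier_circ.
have -> : cdiag n (fun k => f k * g k) = cdiag n f *m cdiag n g.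
  by apply/matrixP => i j; rewrite mul_diag_mx !mxE rmorphM mulrnAr.
by rewrite !mulmxA (mulmxK (dft_unit R m)).
Qed.

Lemma fourier_circ_cst (c : R) : fourier_circ n (fun=> c) = (toC c)%:M.
Proof.
rewrite /fourier_circ.
have -> : cdiag n (fun=> c) = (toC c)%:M by apply/matrixP => i j; rewrite !mxE.
by rewrite mul_mx_scalar -scalemxAl mulVmx ?dft_unit // scalemx1.
Qed.

Lemma eq_fourier_circ f g : f =1 g -> fourier_circ n f = fourier_circ n g.
Proof.
move=> fg; rewrite /fourier_circ /cdiag.
by congr (_ *m diag_mx _ *m _); apply/rowP => k; rewrite !mxE fg.
Qed.

Definition even_symbol f := forall k : 'I_n, f (- k : 'I_n) = f k.

Lemma chi_exprN x (k : 'I_n) : chi x ^+ (- k : 'I_n) = chi (- x) ^+ k.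
Proof.
rewrite /= expr_mod ?chi_exp_n // chiN exprVn.
have chi_k_neq0 : chi x ^+ k != 0 by rewrite expf_neq0 ?chi_neq0.
by apply: (mulIf chi_k_neq0); rewrite mulVf // -exprD subnK ?chi_exp_n // ltnW.
Qed.

Lemma sum_even_symbol_chiN f x : even_symbol f ->
  \sum_(k < n) toC (f k) * chi (- x) ^+ k = \sum_(k < n) toC (f k) * chi x ^+ k.
Proof.
move=> f_even; rewrite [RHS](reindex_inj oppr_inj); apply: eq_bigr => k _.
by rewrite f_even chi_exprN.
Qed.

Lemma conj_fourier_circ f i j : even_symbol f ->
  (fourier_circ n f i j)^* = fourier_circ n f i j.
Proof.
move=> f_even; rewrite !fourier_circE rmorphM rmorph_sum /= conjc_real.
rewrite -[in RHS](sum_even_symbol_chiN _ f_even); congr (_ * _).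
by apply: eq_bigr => k _; rewrite rmorphM rmorphXn /= conjc_real conj_chi.
Qed.

Lemma tr_fourier_circ f : even_symbol f -> (fourier_circ n f)^T = fourier_circ n f.
Proof.
move=> f_even; apply/matrixP => i j; rewrite mxE !fourier_circE.
by rewrite -(sum_even_symbol_chiN _ f_even) opprB.
Qed.

Definition circ_symbol (c : nat -> R) k : C :=
  \sum_(d < n) toC (c d) * chi (- d) ^+ k.

Lemma val_ord_sub (j l : 'I_n) : nat_of_ord (j - l) = ((j + n - l) %% n)%N.
Proof. by rewrite /= modnDmr addnBA // ltnW. Qed.

Lemma dft_circulant c :
  F *m map_mx toC (circulant n c) = diag_mx (\row_k circ_symbol c k) *m F.
Proof.
apply/matrixP => k j; rewrite mul_diag_mx [in RHS]mxE [in RHS]mxE dftE mxE mulr_suml.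
under eq_bigr => l _ do rewrite dftE !mxE -val_ord_sub.
rewrite (reindex_inj (subrI j)); apply: eq_bigr => d _.
by rewrite subKr chiD exprMn; ring.
Qed.

Lemma circulant_fourier c f : (forall k : 'I_n, circ_symbol c k = toC (f k)) ->
  map_mx toC (circulant n c) = fourier_circ n f.
Proof.
move=> c_f; rewrite -[LHS](mulKmx (dft_unit R m)) dft_circulant /fourier_circ mulmxA.
by congr (_ *m _ *m _); apply/matrixP => i j; rewrite !mxE c_f.
Qed.

Lemma Dhat_even : even_symbol (Dhat R n).
Proof.
move=> k; have [->|k_neq0] := eqVneq k 0; first by rewrite oppr0.
have k_gt0 : (0 < k)%N by rewrite lt0n.
have -> : nat_of_ord (- k) = ((n - k) %% n)%N by [].
rewrite modn_small ?ltn_subrL ?k_gt0 // /Dhat natrB 1?ltnW //.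
have -> : pi * (n%:R - k%:R) / n%:R = pi - pi * k%:R / n%:R :> R.
  by rewrite mulrBr mulrBl mulfK ?pnatr_eq0.
by rewrite sinB sinpi cospi mul0r sub0r mulN1r opprK.
Qed.

End FourierMultiplier.

Section D2Calculus.
Variables (R : realType) (m : nat).
Local Notation n := m.+1.
Implicit Types (h : R -> R).

Fact D2fun_key : unit. Proof. by []. Qed.

(* [D2fun h] is [h(D^2)], the real circulant matrix with Fourier symbol
   [h \o Dhat] (see [D2fun_id]).  It is locked so that comparing [D2fun h1]
   with [D2fun h2] never unfolds [invmx (dft R n)]. *)
Definition D2fun : (R -> R) -> 'M[R]_n := locked_with D2fun_key
  (fun h => \matrix_(i, j) complex.Re (fourier_circ n (h \o Dhat R n) i j)).

Lemma map_D2fun h : map_mx toC (D2fun h) = fourier_circ n (h \o Dhat R n).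
Proof.
apply/matrixP => i j; rewrite mxE [D2fun]unlock mxE; apply: conjc_id_Re.
by apply: conj_fourier_circ => k; rewrite /= Dhat_even.
Qed.

Lemma eq_D2fun h1 h2 : h1 =1 h2 -> D2fun h1 = D2fun h2.
Proof.
move=> h12; apply: map_toC_inj; rewrite !map_D2fun.
by apply: eq_fourier_circ => k /=; rewrite h12.
Qed.

Lemma D2funD h1 h2 : D2fun (fun d => h1 d + h2 d) = D2fun h1 + D2fun h2.
Proof. by apply: map_toC_inj; rewrite map_mxD !map_D2fun -fourier_circD. Qed.

Lemma D2funN h : D2fun (fun d => - h d) = - D2fun h.
Proof. by apply: map_toC_inj; rewrite map_mxN !map_D2fun -fourier_circN. Qed.

Lemma D2funM h1 h2 : D2fun (fun d => h1 d * h2 d) = D2fun h1 *m D2fun h2.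
Proof. by apply: map_toC_inj; rewrite map_mxM !map_D2fun -fourier_circM. Qed.

Lemma D2fun_cst c : D2fun (fun=> c) = c%:M.
Proof.
by apply: map_toC_inj; rewrite map_D2fun fourier_circ_cst map_scalar_mx.
Qed.

Lemma tr_D2fun h : (D2fun h)^T = D2fun h.
Proof.
apply: map_toC_inj; rewrite -map_trmx map_D2fun tr_fourier_circ // => k.
by rewrite /= Dhat_even.
Qed.

End D2Calculus.

Section SecondDifference.
Variables (R : realType) (m : nat).
Local Notation n := m.+2.
Local Notation C := R[i].
Local Notation chi := (@chi R m.+1).
Local Notation circ_symbol := (@circ_symbol R m.+1).
Local Notation D2fun := (@D2fun R m.+1).

Lemma sum_mul_if_eq (z : 'I_n -> C) (a : 'I_n) (c : R) :
  \sum_(d < n) toC (if nat_of_ord d == nat_of_ord a then c else 0) * z d = toC c * z a.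
Proof.
rewrite (bigD1 a) //= eqxx big1 ?addr0 // => d da.
by rewrite val_eqE (negPf da) rmorph0 mul0r.
Qed.

Lemma circ_symbol_d2row k : circ_symbol (d2row R n) k = toC (Dhat R n k).
Proof.
have val1 : nat_of_ord (1 : 'I_n) = 1%N by rewrite /= modn_small.
have d2rowE d : d2row R n d = (if d == nat_of_ord (0 : 'I_n) then -2 else 0)
    + (if d == nat_of_ord (1 : 'I_n) then 1 else 0)
    + (if d == nat_of_ord (-1 : 'I_n) then 1 else 0).
  by rewrite /d2row [nat_of_ord (-1 : 'I_n)]/= val1 subn1 modn_small.
rewrite /circ_symbol; under eq_bigr => d _ do rewrite d2rowE !rmorphD !mulrDl.
rewrite !big_split !sum_mul_if_eq opprK oppr0 chiN /chi val1 /= expr0 expr1n expr1.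
rewrite -conj_omega -rmorphXn expr_cos_sinN /toC /Dhat.
have -> : k%:R * (2 * pi / n%:R) = (pi * k%:R / n%:R : R) *+ 2 by rewrite mulr2n; ring.
by rewrite cos_mulr2n cos2sin2 /=; simpc; congr (_ +i* _); ring.
Qed.

Lemma D2_fourier : map_mx toC (D2 R n) = fourier_circ n (Dhat R n).
Proof. exact/circulant_fourier/circ_symbol_d2row. Qed.

Lemma D2fun_id : D2fun (fun d => d) = D2 R n.
Proof. by apply: map_toC_inj; rewrite map_D2fun D2_fourier. Qed.

End SecondDifference.

Section D2CalculusSpectrum.
Variables (R : realType) (m : nat).
Local Notation n := m.+1.
Local Notation D2fun := (@D2fun R m).
Implicit Types (h : R -> R).

Lemma D2fun_eq0 h : h =1 (fun=> 0) -> D2fun h = 0.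
Proof. by move/eq_D2fun->; rewrite D2fun_cst raddf0. Qed.

Lemma D2fun_unit h : (forall d, h d != 0) -> D2fun h \in unitmx.
Proof.
move=> h_neq0; suff /mulmx1_unit[] : D2fun (fun d => (h d)^-1) *m D2fun h = 1%:M by [].
by rewrite -D2funM -D2fun_cst; apply: eq_D2fun => d; rewrite mulVf.
Qed.

(* The eigenvalues of [[0, 1], [-a(D^2), -b(D^2)]] are the roots of the
   frequency-wise characteristic polynomials [z^2 + b(d) z + a(d)]. *)
Lemma hurwitz_companion (a b : R -> R) :
  (forall d, 0 < a d) -> (forall d, 0 < b d) ->
  hurwitz (block_mx 0 (D2fun (fun=> 1)) (D2fun (fun d => - a d)) (D2fun (fun d => - b d))).
Proof.
move=> a_gt0 b_gt0 z /eigenvalueP[v]; rewrite -[v]hsubmxK => vM v_neq0.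
move: vM; rewrite map_block_mx map_mx0 D2fun_cst map_scalar_mx rmorph1.
rewrite mul_row_block !mulmx0 add0r mulmx1 scale_row_mx => /eq_row_mx[yA xyB].
set x := lsubmx v in xyB yA v_neq0; set y := rsubmx v in xyB yA v_neq0.
have x_def : x = z *: y - y *m map_mx toC (D2fun (fun d => - b d)) by rewrite -xyB addrK.
have y_neq0 : y != 0.
  by apply: contra v_neq0 => /eqP y0; rewrite x_def y0 mul0mx scaler0 subr0 row_mx0.
pose c : 'rV_n := \row_k (toC (- a (Dhat R n k)) + z * toC (- b (Dhat R n k)) - z ^+ 2).
have Mc : map_mx toC (D2fun (fun d => - a d)) + z *: map_mx toC (D2fun (fun d => - b d))
    - (z ^+ 2)%:M = invmx (dft R n) *m diag_mx c *m dft R n.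
  have -> : diag_mx c = cdiag n (fun k => - a (Dhat R n k))
      + z *: cdiag n (fun k => - b (Dhat R n k)) - (z ^+ 2)%:M.
    apply/matrixP => i j; rewrite !mxE.
    by case: eqP; rewrite ?mulr1n ?mulr0n ?mulr0 ?subr0 ?addr0.
  rewrite !map_D2fun /fourier_circ mulmxBr mulmxDr mulmxBl mulmxDl -scalemxAr -scalemxAl.
  by rewrite mul_mx_scalar -scalemxAl mulVmx ?dft_unit // scalemx1.
have [|k /eqP] := conj_diag_singular (dft_unit R m) y_neq0 (d := c).
  rewrite -Mc mulmxBr mulmxDr yA x_def -scalemxAr mul_mx_scalar scalerBr scalerA.
  by rewrite -expr2 subrK subrr.
rewrite mxE => /eqP c_k.
apply: (Re_quadratic_root_lt0 (a_gt0 (Dhat R n k)) (b_gt0 (Dhat R n k))).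
by rewrite -[RHS]oppr0 -c_k !rmorphN /toC; ring.
Qed.

End D2CalculusSpectrum.

Section ScalarRiccati.
Variables (R : realType) (Pi2 Pi3 : R).
Hypotheses (Pi2_gt0 : 0 < Pi2) (Pi3_gt0 : 0 < Pi3).
Implicit Types d : R.

Definition gain1 d := d + Num.sqrt (d ^+ 2 + Pi3 ^+ 2).
Definition gain2 d := Num.sqrt (2 * gain1 d + Pi2 * Pi3 ^+ 2).

Let sqrt_gt_abs d : `|d| < Num.sqrt (d ^+ 2 + Pi3 ^+ 2).
Proof.
have d2_ge0 := sqr_ge0 d; have Pi3_2_gt0 := exprn_gt0 2 Pi3_gt0.
by rewrite -sqrtr_sqr ltr_sqrt; lra.
Qed.

Lemma gain1_sub_gt0 d : 0 < gain1 d - d.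
Proof. by rewrite /gain1 addrC addKr (le_lt_trans _ (sqrt_gt_abs d)). Qed.

Lemma gain1_gt0 d : 0 < gain1 d.
Proof.
by rewrite /gain1 -ltrBlDl sub0r (le_lt_trans _ (sqrt_gt_abs d)) // -normrN ler_norm.
Qed.

Lemma gain1_riccati d : gain1 d ^+ 2 - 2 * d * gain1 d = Pi3 ^+ 2.
Proof.
rewrite /gain1; set s := Num.sqrt _.
have s2 : s ^+ 2 = d ^+ 2 + Pi3 ^+ 2 by rewrite sqr_sqrtr // addr_ge0 ?sqr_ge0.
transitivity (s ^+ 2 - d ^+ 2); first by ring.
by rewrite s2 addrC addKr.
Qed.

Lemma gain2_gt0 d : 0 < gain2 d.
Proof. by rewrite sqrtr_gt0 addr_gt0 ?mulr_gt0 ?exprn_gt0 ?gain1_gt0. Qed.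

Lemma gain2_sqr d : gain2 d ^+ 2 = 2 * gain1 d + Pi2 * Pi3 ^+ 2.
Proof. by rewrite sqr_sqrtr // ltW // addr_gt0 ?mulr_gt0 ?exprn_gt0 ?gain1_gt0. Qed.

End ScalarRiccati.

Section RiccatiSymbol.
Variables (R : realType) (Pi2 Pi3 : R).
Hypotheses (Pi2_gt0 : 0 < Pi2) (Pi3_gt0 : 0 < Pi3).
Implicit Types d : R.
Local Notation r := (Pi3 ^+ 2).
Local Notation gain1 := (gain1 Pi3).
Local Notation gain2 := (gain2 Pi2 Pi3).

Definition ric11 d := (gain1 d - d) * gain2 d / r.
Definition ric12 d := gain1 d / r.
Definition ric22 d := gain2 d / r.

Let Pi3_neq0 : Pi3 != 0. Proof. exact: lt0r_neq0. Qed.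

(* The three entries of the frequency-wise Riccati equation for
   [a = [[0, 1], [d, 0]]], [b = [0; 1]], [q = diag(1, Pi2)], [rw = 1 / r]. *)
Lemma riccati_symbol11 d : 2 * d * ric12 d - r * ric12 d ^+ 2 + 1 = 0.
Proof.
transitivity ((r - (gain1 d ^+ 2 - 2 * d * gain1 d)) / r).
  by rewrite /ric12; field.
by rewrite gain1_riccati subrr mul0r.
Qed.

Lemma riccati_symbol12 d : ric11 d + d * ric22 d - r * ric12 d * ric22 d = 0.
Proof. by rewrite /ric11 /ric12 /ric22; field. Qed.

Lemma riccati_symbol22 d : 2 * ric12 d - r * ric22 d ^+ 2 + Pi2 = 0.
Proof.
transitivity ((2 * gain1 d + Pi2 * r - gain2 d ^+ 2) / r).
  by rewrite /ric12 /ric22; field.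
by rewrite gain2_sqr // subrr mul0r.
Qed.

Definition chol11 d := Num.sqrt (ric11 d).
Definition chol12 d := ric12 d / chol11 d.
Definition chol22 d := Num.sqrt (ric22 d - chol12 d ^+ 2).

Lemma ric11_gt0 d : 0 < ric11 d.
Proof. by rewrite divr_gt0 ?mulr_gt0 ?exprn_gt0 ?gain1_sub_gt0 ?gain2_gt0. Qed.

(* Since [chol12 ^ 2 = ric12 ^ 2 / ric11], this is the Schur complement of [ric11]. *)
Lemma ric_schur_gt0 d : 0 < ric22 d - chol12 d ^+ 2.
Proof.
have ric11_pos := ric11_gt0 d.
have -> : chol12 d ^+ 2 = ric12 d ^+ 2 / ric11 d.
  by rewrite /chol12 /chol11 expr_div_n sqr_sqrtr // ltW.
have k1d_neq0 := lt0r_neq0 (gain1_sub_gt0 Pi3_gt0 d).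
have k2_neq0 := lt0r_neq0 (gain2_gt0 Pi2_gt0 Pi3_gt0 d).
have -> : ric22 d - ric12 d ^+ 2 / ric11 d
    = (gain2 d ^+ 2 * (gain1 d - d) - gain1 d ^+ 2) / (r * (gain1 d - d) * gain2 d).
  by rewrite /ric11 /ric12 /ric22; field; rewrite k2_neq0 k1d_neq0 Pi3_neq0.
rewrite gain2_sqr // (_ : _ - _ = r + (gain1 d - d) * Pi2 * r); last first.
  by rewrite -(gain1_riccati Pi3 d); ring.
by rewrite divr_gt0 ?addr_gt0 ?mulr_gt0 ?exprn_gt0 ?gain1_sub_gt0 ?gain2_gt0.
Qed.

Lemma chol11_neq0 d : chol11 d != 0.
Proof. by rewrite lt0r_neq0 // sqrtr_gt0 ric11_gt0. Qed.

Lemma chol22_neq0 d : chol22 d != 0.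
Proof. by rewrite lt0r_neq0 // sqrtr_gt0 ric_schur_gt0. Qed.

Lemma chol11_sqr d : chol11 d * chol11 d = ric11 d.
Proof. by rewrite -expr2 sqr_sqrtr // ltW // ric11_gt0. Qed.

Lemma chol11_12 d : chol11 d * chol12 d = ric12 d.
Proof. by rewrite mulrC divfK // chol11_neq0. Qed.

Lemma chol12_22_sqr d : chol12 d * chol12 d + chol22 d * chol22 d = ric22 d.
Proof. by rewrite -!expr2 sqr_sqrtr ?ltW ?ric_schur_gt0 // addrC subrK. Qed.

End RiccatiSymbol.

Section LQR.
Variables (R : realType) (m : nat) (Pi2 Pi3 : R).
Hypotheses (Pi2_gt0 : 0 < Pi2) (Pi3_gt0 : 0 < Pi3).
Local Notation n := m.+2.
Local Notation D2fun := (@D2fun R m.+1).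
Local Notation A := (Amat R n).
Local Notation B := (Bmat R n).
Local Notation Q := (Qmat n Pi2).
Local Notation Rw := (Rmat n Pi3).
Local Notation gain1 := (gain1 Pi3).
Local Notation gain2 := (gain2 Pi2 Pi3).
Local Notation ric11 := (ric11 Pi2 Pi3).
Local Notation ric12 := (ric12 Pi3).
Local Notation ric22 := (ric22 Pi2 Pi3).

Definition lqr_P : 'M[R]_(n + n) :=
  block_mx (D2fun ric11) (D2fun ric12) (D2fun ric12) (D2fun ric22).

Lemma Amat_D2fun : A = block_mx 0 (D2fun (fun=> 1)) (D2fun id) 0.
Proof. by rewrite D2fun_cst D2fun_id. Qed.

Lemma BRB_D2fun : B *m invmx Rw *m B^T = block_mx 0 0 0 (D2fun (fun=> Pi3 ^+ 2)).
Proof.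
rewrite /Rmat invmx_scalar invrK /Bmat tr_col_mx mul_col_mx mul_col_row !trmx0 trmx1.
by rewrite D2fun_cst !mul0mx !mulmx0 mul1mx mulmx1.
Qed.

Lemma care_lqr_P : care A B Q Rw lqr_P.
Proof.
rewrite /care -!mulmxA (mulmxA B) (mulmxA _ B^T) BRB_D2fun Amat_D2fun /Qmat.
rewrite -!D2fun_cst /lqr_P tr_block_mx !trmx0 !tr_D2fun !mulmx_block.
rewrite !mulmx0 !mul0mx !addr0 !add0r opp_block_mx !add_block_mx ?addr0 -block_mx0.
congr block_mx; rewrite -!D2funM !mulmx0 !add0r -!D2funN -!D2funD.
all: apply: D2fun_eq0 => d /=.
- by rewrite -(riccati_symbol11 Pi3_gt0 d); ring.
- by rewrite -(riccati_symbol12 Pi2 Pi3_gt0 d); ring.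
- by rewrite -(riccati_symbol12 Pi2 Pi3_gt0 d); ring.
- by rewrite -(riccati_symbol22 Pi2_gt0 Pi3_gt0 d); ring.
Qed.

Lemma lqr_gain_lqr_P : lqr_gain B Rw lqr_P = row_mx (D2fun gain1) (D2fun gain2).
Proof.
rewrite /lqr_gain /Rmat invmx_scalar invrK /Bmat tr_col_mx trmx0 trmx1 mul_mx_row.
rewrite mulmx0 mulmx1 /lqr_P mul_row_block !mul0mx !add0r -D2fun_cst -!D2funM.
congr row_mx; apply: eq_D2fun => d.
all: by rewrite /ric12 /ric22 mulrC divfK ?expf_neq0 ?lt0r_neq0.
Qed.

Lemma hurwitz_lqr_P : hurwitz (A - B *m lqr_gain B Rw lqr_P).
Proof.
have -> : A - B *m lqr_gain B Rw lqr_P = block_mx 0 (D2fun (fun=> 1))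
    (D2fun (fun d => - (gain1 d - d))) (D2fun (fun d => - gain2 d)).
  rewrite lqr_gain_lqr_P Amat_D2fun /Bmat mul_col_row !mul0mx !mul1mx opp_block_mx.
  rewrite add_block_mx !subrr subr0 sub0r -!D2funN -D2funD.
  by congr block_mx; apply: eq_D2fun => d; rewrite opprB addrC.
apply: hurwitz_companion => d; first exact: gain1_sub_gt0.
exact: gain2_gt0.
Qed.

Definition lqr_chol : 'M[R]_(n + n) := block_mx (D2fun (chol11 Pi2 Pi3))
  (D2fun (chol12 Pi2 Pi3)) 0 (D2fun (chol22 Pi2 Pi3)).

Lemma lqr_P_chol : lqr_P = lqr_chol^T *m lqr_chol.
Proof.
rewrite /lqr_chol.
rewrite tr_block_mx trmx0 !tr_D2fun mulmx_block !mulmx0 !mul0mx !addr0 -!D2funM.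
rewrite -D2funD /lqr_P; congr block_mx; apply: eq_D2fun => d.
- by rewrite chol11_sqr.
- by rewrite chol11_12.
- by rewrite mulrC chol11_12.
- by rewrite chol12_22_sqr.
Qed.

Lemma posdef_lqr_P : posdef_mx lqr_P.
Proof.
rewrite lqr_P_chol; apply: posdef_trmx_mul.
rewrite /lqr_chol unitmxE det_ublock unitrM -!unitmxE.
by rewrite !D2fun_unit // => d; rewrite ?chol11_neq0 ?chol22_neq0.
Qed.

Lemma lqr_riccati_sol_lqr_P : lqr_riccati_sol A B Q Rw lqr_P.
Proof.
split; [| exact: posdef_lqr_P | exact: care_lqr_P | exact: hurwitz_lqr_P].
by rewrite /sym_mx /lqr_P tr_block_mx !tr_D2fun.
Qed.

End LQR.

Unset Implicit Arguments.

Theorem lemma1 (R : realType) (n : nat) (Pi2 Pi3 : R) :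
  (2 <= n)%N -> 0 < Pi2 -> 0 < Pi3 ->
  (exists P : 'M[R]_(n + n),
     lqr_riccati_sol (Amat R n) (Bmat R n) (Qmat n Pi2) (Rmat n Pi3) P) /\
  (forall P : 'M[R]_(n + n),
     lqr_riccati_sol (Amat R n) (Bmat R n) (Qmat n Pi2) (Rmat n Pi3) P ->
     map_mx (@toC R) (lqr_gain (Bmat R n) (Rmat n Pi3) P) =
       row_mx (fourier_circ n (Khat0 n Pi3)) (fourier_circ n (Khat2 n Pi2 Pi3))).
Proof.
case: n => [|[|m]] // _ Pi2_gt0 Pi3_gt0.
have solP := lqr_riccati_sol_lqr_P m Pi2_gt0 Pi3_gt0.
split=> [|P solP']; first by exists (lqr_P m Pi2 Pi3).
rewrite (lqr_riccati_sol_unique (tr_scalar_mx _ _) solP' solP) lqr_gain_lqr_P //.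
by rewrite map_row_mx !map_D2fun.
Qed.
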